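(* Let $\mathcal G$ be a braided stability groupoid and $l,m,n$ objects of $U\mathcal G$. Then the map $\mathrm{Hom}(m,l\oplus m)\to\mathrm{Hom}(m\oplus n,l\oplus m\oplus n)$, $\psi\mapsto\psi\oplus\mathrm{id}_n$, is injective, and its image is $\{\chi\in\mathrm{Hom}(m\oplus n,l\oplus m\oplus n)\mid\chi\circ(\iota_m\oplus\mathrm{id}_n)=\iota_{l\oplus m}\oplus\mathrm{id}_n\}$.
   Context: Stability groupoid: a monoidal groupoid $(\mathcal G,\oplus,0)$ with objects $(\mathbb N,+,0)$, $G_n=\mathrm{Aut}(n)$, such that $\oplus\colon G_m\times G_n\to G_{m+n}$ is injective, $G_0$ is trivial, and $(G_{l+m}\times1)\cap(1\times G_{m+n})=1\times G_m\times1$ in $G_{l+m+n}$; braided: equipped with a braiding $b_{m,n}\in G_{m+n}$ of the monoidal groupoid. $U\mathcal G$: objects $\mathbb N$, $\mathrm{Hom}(m,n)=G_n/G_{n-m}$ for $m\le n$ ($G_{n-m}\subset G_n$ via $g\mapsto g\oplus\mathrm{id}_m$), empty otherwise; composition $fG_l\circ gG_m=f(\mathrm{id}_l\oplus g)G_{l+m}$; monoidal structure $f_1G_{m_1}\oplus f_2G_{m_2}=(f_1\oplus f_2)(\mathrm{id}_{m_1}\oplus b^{-1}_{n_1,m_2}\oplus\mathrm{id}_{n_2})G_{m_1+m_2}$ for $f_jG_{m_j}\colon n_j\to m_j+n_j$. The unit $0$ is initial; $\iota_m\colon0\to m$ is the unique morphism. *)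

(* A braided stability groupoid, presented as
   a family of groups G n = Aut(n), n : nat, with a strict monoidal product
   and a braiding; and the category UG with morphisms given by cosets. *)
From mathcomp Require Import all_boot zify.
Set Implicit Arguments. Unset Strict Implicit. Unset Printing Implicit Defensive.

(* Composition convention: [mul n x y] = x o y (first y, then x). *)
Record BraidedStabilityGroupoid := {
  gG : nat -> Type;
  mul : forall n, gG n -> gG n -> gG n;
  one : forall n, gG n;
  inv : forall n, gG n -> gG n;
  mulA : forall n (x y z : gG n), mul x (mul y z) = mul (mul x y) z;
  mul1g : forall n (x : gG n), mul (one n) x = x;
  mulg1 : forall n (x : gG n), mul x (one n) = x;
  mulVg : forall n (x : gG n), mul (inv x) x = one n;
  mulgV : forall n (x : gG n), mul x (inv x) = one n;
  oplus : forall m n, gG m -> gG n -> gG (m + n);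
  oplus_mul : forall m n (g g' : gG m) (h h' : gG n),
    oplus (mul g g') (mul h h') = mul (oplus g h) (oplus g' h');
  oplus_one : forall m n, oplus (one m) (one n) = one (m + n);
  oplusA : forall m n p (g : gG m) (h : gG n) (k : gG p),
    eq_rect _ gG (oplus g (oplus h k)) _ (addnA m n p) = oplus (oplus g h) k;
  oplus0l : forall n (g : gG n), eq_rect _ gG (oplus (one 0) g) _ (add0n n) = g;
  oplus0r : forall n (g : gG n), eq_rect _ gG (oplus g (one 0)) _ (addn0 n) = g;
  oplus_inj : forall m n (g g' : gG m) (h h' : gG n),
    oplus g h = oplus g' h' -> g = g' /\ h = h';
  G0_trivial : forall g : gG 0, g = one 0;
  intersection : forall l m n (x : gG (l + m + n)),
    ((exists g : gG (l + m), x = oplus g (one n)) /\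
     (exists h : gG (m + n), x = eq_rect _ gG (oplus (one l) h) _ (addnA l m n)))
    <-> (exists k : gG m, x = oplus (oplus (one l) k) (one n));
  (* braiding b_{m,n} : m (+) n -> n (+) m, an element of G_{m+n} *)
  braid : forall m n, gG (m + n);
  braid_nat : forall m n (g : gG m) (h : gG n),
    mul (braid m n) (oplus g h)
    = mul (eq_rect _ gG (oplus h g) _ (addnC n m)) (braid m n);
  braid_hex1 : forall l m n,
    braid l (m + n)
    = mul (eq_rect _ gG (oplus (one m) (braid l n)) _ (addnCA m l n))
          (eq_rect _ gG (oplus (braid l m) (one n)) _ (esym (addnA l m n)));
  braid_hex2 : forall l m n,
    braid (l + m) n
    = mul (eq_rect _ gG (oplus (braid l n) (one m)) _ (addnAC l n m))
          (eq_rect _ gG (oplus (one l) (braid m n)) _ (addnA l m n))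
}.

Arguments mul {b n}. Arguments one {b}. Arguments inv {b n}.
Arguments oplus {b m n}. Arguments braid {b}.

Section UG.
Variable S : BraidedStabilityGroupoid.
Local Notation G := (gG S).

Definition castG m n (e : m = n) (x : G m) : G n := eq_rect m G x n e.

(* A morphism m -> n of UG (m <= n), represented by f in G_n standing for
   the coset f G_{n-m}. *)
Record UMor (m n : nat) := { ule : m <= n; urep : G n }.

Definition incl m n (H : m <= n) (g : G (n - m)) : G n :=
  castG (subnK H) (oplus g (one m)).

(* equality in Hom(m,n) = G_n / G_{n-m} (equality of left cosets) *)
Definition ueq m n (f f' : UMor m n) : Prop :=
  exists g : G (n - m), urep f' = mul (urep f) (incl (ule f) g).

Definition uid n : UMor n n := {| ule := leqnn n; urep := one n |}.

Definition uiota m : UMor 0 m := {| ule := leq0n m; urep := one m |}.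

Lemma comp_eq (a b c : nat) : b <= c -> (c - b) + b = c.
Proof. exact: subnK. Qed.

(* f G_l o g G_m = f (id_l (+) g) G_{l+m} *)
Definition ucomp (a b c : nat) (f : UMor b c) (g : UMor a b) : UMor a c :=
  {| ule := leq_trans (ule g) (ule f);
     urep := mul (urep f) (castG (subnK (ule f)) (oplus (one (c - b)) (urep g))) |}.

Lemma uplus_eq (n1 p1 n2 p2 : nat) : n1 <= p1 -> n2 <= p2 ->
  (p1 - n1) + (n1 + (p2 - n2)) + n2 = p1 + p2.
Proof.
move=> h1 h2; lia.
Qed.

(* f1 G_{m1} (+) f2 G_{m2}
     = (f1 (+) f2)(id_{m1} (+) b^{-1}_{n1,m2} (+) id_{n2}) G_{m1+m2} *)
Definition uplus (n1 p1 n2 p2 : nat) (f1 : UMor n1 p1) (f2 : UMor n2 p2)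
  : UMor (n1 + n2) (p1 + p2) :=
  {| ule := leq_add (ule f1) (ule f2);
     urep := mul (oplus (urep f1) (urep f2))
               (castG (uplus_eq (ule f1) (ule f2))
                  (oplus (oplus (one (p1 - n1)) (inv (braid n1 (p2 - n2))))
                         (one n2))) |}.

End UG.

(** Since the braiding [b_{m,0}] is trivial, [ψ ⊕ id_n] is represented by
    [ψ ⊕ 1_n], and the subgroup [G_l ⊕ 1_{m+n}] defining its coset is the image
    of [G_l ⊕ 1_m] under [- ⊕ 1_n]; injectivity of [⊕] then gives injectivity of
    [ψ ↦ ψ ⊕ id_n].  On the other hand [ι_m ⊕ id_n] is represented by [1], so
    [χ ∘ (ι_m ⊕ id_n) = ι_{l+m} ⊕ id_n] says exactly that [χ ∈ G_{l+m} ⊕ 1_n],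
    and the cosets of such elements are those of the form [(ψ ⊕ 1_n) G_l]. *)
From mathcomp Require Import all_boot.
Set Implicit Arguments. Unset Strict Implicit. Unset Printing Implicit Defensive.

Section UGLemmas.
Variable S : BraidedStabilityGroupoid.
Local Notation G := (gG S).

Lemma castG_id n (e : n = n) (x : G n) : castG e x = x.
Proof. by rewrite (eq_axiomK e). Qed.

Lemma castG_irrelevance m n (e e' : m = n) (x : G m) : castG e x = castG e' x.
Proof. by rewrite (eq_irrelevance e e'). Qed.

Lemma castG_comp m n p (e1 : m = n) (e2 : n = p) (x : G m) :
  castG e2 (castG e1 x) = castG (etrans e1 e2) x.
Proof. by case: _ / e2; case: _ / e1. Qed.

Lemma castG_one m n (e : m = n) : castG e (one m : G m) = one n.
Proof. by case: _ / e. Qed.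

Lemma castG_inv m n (e : m = n) (x : G m) : castG e (inv x) = inv (castG e x).
Proof. by case: _ / e. Qed.

Lemma oplus_castl a a' b (e : a = a') (x : G a) (y : G b) :
  oplus (castG e x) y = castG (f_equal (addn^~ b) e) (oplus x y).
Proof. by case: _ / e. Qed.

Lemma mul_eq1_inv n (x y : G n) : mul x y = one n -> x = inv y.
Proof. by move=> xy1; rewrite -(mulg1 x) -(mulgV y) mulA xy1 mul1g. Qed.

Lemma inv1 n : inv (one n) = one n :> G n.
Proof. by symmetry; apply: mul_eq1_inv; rewrite mulg1. Qed.

Lemma inv_oplus a b (x : G a) (y : G b) : inv (oplus x y) = oplus (inv x) (inv y).
Proof. by symmetry; apply: mul_eq1_inv; rewrite -oplus_mul !mulVg oplus_one. Qed.

Lemma idempotent_one n (x : G n) : mul x x = x -> x = one n.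
Proof. by move=> /(f_equal (mul (inv x))); rewrite mulA mulVg mul1g. Qed.

(* The hexagon identity for [b_{a,0+0}] reads [b_{a,0} = b_{a,0} b_{a,0}]. *)
Lemma braid_n0 a k : k = 0 -> braid a k = one (a + k) :> G (a + k).
Proof.
move->; apply: idempotent_one.
have hex := braid_hex1 S a 0 0.
rewrite -[X in mul _ X = _](oplus0r (braid a 0)).
rewrite -[X in mul X _ = _](oplus0l (braid a 0)).
rewrite (eq_irrelevance (add0n _) (addnCA 0 a 0)).
by rewrite (eq_irrelevance (addn0 _) (esym (addnA a 0 0))) -hex.
Qed.

Lemma urep_uplus_uid n a b (f : UMor S a b) :
  urep (uplus f (uid S n)) = oplus (urep f) (one n).
Proof.
by rewrite /= (braid_n0 a (subnn n)) inv1 !oplus_one castG_one mulg1.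
Qed.

Lemma urep_ucomp_one a b c (f : UMor S b c) (g : UMor S a b) :
  urep g = one b -> urep (ucomp f g) = urep f.
Proof. by move=> /= ->; rewrite oplus_one castG_one mulg1. Qed.

Lemma incl1 m n (le : m <= n) : incl le (one (n - m) : G (n - m)) = one n.
Proof. by rewrite /incl oplus_one castG_one. Qed.

Lemma incl_inv m n (le : m <= n) (g : G (n - m)) : inv (incl le g) = incl le (inv g).
Proof. by rewrite /incl -castG_inv inv_oplus inv1. Qed.

Lemma incl0 n (le : 0 <= n) (g : G (n - 0)) : incl le g = castG (subn0 n) g.
Proof.
rewrite -[in RHS](oplus0r g) -/castG castG_comp.
exact: castG_irrelevance.
Qed.

Lemma incl_addn a b n (le : a <= b) (le' : a + n <= b + n) (g : G (b + n - (a + n))) :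
  incl le' g = oplus (incl le (castG (subnDr n b a) g)) (one n).
Proof.
rewrite /incl oplus_castl -oplusA -/castG oplus_one oplus_castl !castG_comp.
exact: castG_irrelevance.
Qed.

Lemma ueq_to_one c d (f g : UMor S c d) : urep g = one d ->
  ueq f g <-> exists h : G (d - c), urep f = incl (ule f) h.
Proof.
move=> g1; rewrite /ueq g1; split=> [[h /esym /mul_eq1_inv ->] | [h ->]].
  by exists (inv h); rewrite incl_inv.
by exists (inv h); rewrite -incl_inv mulgV.
Qed.

Lemma uplus_uid_inj a b n (f f' : UMor S a b) :
  ueq (uplus f (uid S n)) (uplus f' (uid S n)) -> ueq f f'.
Proof.
move=> [g]; rewrite !urep_uplus_uid (incl_addn (ule f)) -oplus_mul mulg1.
by move=> /oplus_inj[f_f' _]; exists (castG (subnDr n b a) g).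
Qed.

Lemma image_uplus_uid a b n (le : a <= b) (chi : UMor S (a + n) (b + n)) :
  (exists psi : UMor S a b, ueq (uplus psi (uid S n)) chi)
  <-> exists g : G b, urep chi = oplus g (one n).
Proof.
split=> [[psi [g ->]] | [g chi_g]].
  by rewrite urep_uplus_uid (incl_addn (ule psi)) -oplus_mul mulg1; eexists.
exists {| ule := le; urep := g |}, (one _).
by rewrite incl1 mulg1 urep_uplus_uid.
Qed.

Lemma ueq_ucomp_uiota_uid a b n (chi : UMor S (a + n) (b + n)) :
  ueq (ucomp chi (uplus (uiota S a) (uid S n))) (uplus (uiota S b) (uid S n))
  <-> exists g : G b, urep chi = oplus g (one n).
Proof.
rewrite ueq_to_one ?urep_ucomp_one ?urep_uplus_uid ?oplus_one //=.
set e := etrans (subnDr n b 0) (subn0 b).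
split=> [[h ->] | [g ->]].
  by rewrite (incl_addn (leq0n b)) incl0 castG_comp; eexists.
exists (castG (esym e) g).
by rewrite (incl_addn (leq0n b)) incl0 !castG_comp castG_id.
Qed.

End UGLemmas.

Theorem proposition4p1 (S : BraidedStabilityGroupoid) (l m n : nat) :
  (forall psi psi' : UMor S m (l + m),
      ueq (uplus psi (uid S n)) (uplus psi' (uid S n)) -> ueq psi psi')
  /\
  (forall chi : UMor S (m + n) (l + m + n),
      (exists psi : UMor S m (l + m), ueq (uplus psi (uid S n)) chi)
      <-> ueq (ucomp chi (uplus (uiota S m) (uid S n)))
              (uplus (uiota S (l + m)) (uid S n))).
Proof.
split=> [psi psi' | chi]; first exact: uplus_uid_inj.
by rewrite ueq_ucomp_uiota_uid (image_uplus_uid (leq_addl l m)).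
Qed.
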